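(* Let $E=\{ax^4+by^4+cx^2y^2:a,b,c\in\mathbb{R}\}$ with the sup norm over $[-1,1]^2$. Then $$D_{\mathbb{R},4}(E):=\sup\left\{\frac{(|a|^{8/5}+|b|^{8/5}+|c|^{8/5})^{5/8}}{\|ax^4+by^4+cx^2y^2\|}:(a,b,c)\neq0\right\}=\left(2+3^{8/5}\right)^{5/8}\approx3.610,$$ attained at $\pm(x^4+y^4-3x^2y^2)$. In particular $D_{\mathbb{R},4}\ge D_{\mathbb{R},4}(\ell_\infty^2)\ge(2+3^{8/5})^{5/8}\approx3.610$.
   Context: $\ell_\infty^n$ is $\mathbb{R}^n$ with the sup norm; for a polynomial $P$ on $\ell_\infty^n$, $\|P\|=\sup_{x\in[-1,1]^n}|P(x)|$. For $P(x)=\sum_{|\alpha|=m}a_\alpha x^\alpha$, $D_{\mathbb{R},m}(\ell_\infty^n)=\sup\{(\sum_{|\alpha|=m}|a_\alpha|^{\frac{2m}{m+1}})^{\frac{m+1}{2m}}/\|P\|: P\ne 0 \text{ real $m$-homogeneous on }\ell_\infty^n\}$ and $D_{\mathbb{R},m}=\sup_nD_{\mathbb{R},m}(\ell_\infty^n)$ is the optimal constant in the real polynomial Bohnenblust–Hille inequality. *)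

From Stdlib Require Import Reals Lra List.
Import ListNotations.
Open Scope R_scope.

(* t^p for t >= 0, p > 0, with the convention 0^p = 0
   (Stdlib's Rpower 0 p = 1, which is the wrong convention). *)
Definition rpow (t p : R) : R :=
  if Req_EM_T t 0 then 0 else Rpower t p.

Definition sup_norm2_is (f : R -> R -> R) (N : R) : Prop :=
  is_lub (fun v => exists x y, Rabs x <= 1 /\ Rabs y <= 1 /\ v = Rabs (f x y)) N.

Definition polyE (a b c : R) (x y : R) : R :=
  a * x ^ 4 + b * y ^ 4 + c * x ^ 2 * y ^ 2.

Definition lp_norm3 (p a b c : R) : R :=
  rpow (rpow (Rabs a) p + rpow (Rabs b) p + rpow (Rabs c) p) (/ p).

Definition DE_set : R -> Prop :=
  fun r => exists a b c N, (a, b, c) <> (0, 0, 0) /\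
    sup_norm2_is (polyE a b c) N /\ r = lp_norm3 (8/5) a b c / N.

(* multi-indices alpha in N^n with |alpha| = m, as lists of length n *)
Fixpoint multi_indices (n m : nat) : list (list nat) :=
  match n with
  | O => match m with O => [[]] | S _ => [] end
  | S n' => flat_map (fun k => map (cons k) (multi_indices n' (m - k)))
                     (seq 0 (S m))
  end.

Fixpoint monom (x : list R) (alpha : list nat) : R :=
  match x, alpha with
  | xi :: xs, k :: ks => xi ^ k * monom xs ks
  | _, _ => 1
  end.

Definition sumR (l : list R) : R := fold_right Rplus 0 l.

Definition hpoly (n m : nat) (a : list nat -> R) (x : list R) : R :=
  sumR (map (fun al => a al * monom x al) (multi_indices n m)).

Definition sup_norm_is (n : nat) (f : list R -> R) (N : R) : Prop :=
  is_lub (fun v => exists x, length x = n /\ Forall (fun t => Rabs t <= 1) x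
                             /\ v = Rabs (f x)) N.

Definition D_set (m n : nat) : R -> Prop :=
  fun r => exists (a : list nat -> R) N,
    (exists al, In al (multi_indices n m) /\ a al <> 0) /\
    sup_norm_is n (hpoly n m a) N /\
    r = rpow (sumR (map (fun al => rpow (Rabs (a al)) (2 * INR m / (INR m + 1)))
                        (multi_indices n m)))
             ((INR m + 1) / (2 * INR m)) / N.

(* ratios defining D_{R,m} = sup_n D_{R,m}(l_infty^n) *)
Definition D_all_set (m : nat) : R -> Prop :=
  fun r => exists n, D_set m n r.

Definition C4 : R := rpow (2 + rpow 3 (8/5)) (5/8).

(* Upper bound: evaluating P = a x^4 + b y^4 + c x^2 y^2 at (1,0), (0,1) and
   (1,1) gives |a|, |b|, |a+b+c| <= ||P||, hence |c| <= 3 ||P||.  Since the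
   l^p norm of a coefficient vector is monotone in the moduli and positively
   homogeneous, ||(a,b,c)||_p <= ||P|| * ||(1,1,3)||_p = ||P|| * C4.
   Lower bound: Q = x^4 + y^4 - 3 x^2 y^2 has ||Q|| = 1 (with s = x^2,
   t = y^2 in [0,1], (s-t)^2 - s t lies in [-1,1]) and ||(1,1,-3)||_p = C4.
   The same polynomial, read as a 4-homogeneous polynomial on l_infty^2,
   gives the lower bounds for D_{R,4}(l_infty^2) and D_{R,4}. *)

From Stdlib Require Import Reals List Lra.
Import ListNotations.
Open Scope R_scope.

Lemma Rabs_le_inv (x b : R) : Rabs x <= b -> -b <= x <= b.
Proof. unfold Rabs; destruct (Rcase_abs x); lra. Qed.

Lemma rpow_0 (p : R) : rpow 0 p = 0.
Proof. unfold rpow; destruct (Req_EM_T 0 0); lra. Qed.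

Lemma rpow_pos (t p : R) : 0 < t -> rpow t p = Rpower t p.
Proof. intro Ht; unfold rpow; destruct (Req_EM_T t 0); [lra | reflexivity]. Qed.

Lemma rpow_1 (p : R) : rpow 1 p = 1.
Proof. rewrite rpow_pos by lra; unfold Rpower; rewrite ln_1, Rmult_0_r; apply exp_0. Qed.

Lemma rpow_nonneg (t p : R) : 0 <= rpow t p.
Proof. unfold rpow; destruct (Req_EM_T t 0); [lra | left; apply exp_pos]. Qed.

Lemma rpow_gt0 (t p : R) : 0 < t -> 0 < rpow t p.
Proof. intro Ht; rewrite rpow_pos by lra; apply exp_pos. Qed.

Lemma rpow_le (t u p : R) : 0 <= t -> t <= u -> 0 < p -> rpow t p <= rpow u p.
Proof.
  intros Ht Htu Hp; destruct (Req_EM_T t 0) as [-> | Ht0].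
  - rewrite rpow_0; apply rpow_nonneg.
  - rewrite !rpow_pos by lra; apply Rle_Rpower_l; lra.
Qed.

Lemma rpow_mul (x y p : R) : 0 < x -> 0 <= y -> rpow (x * y) p = rpow x p * rpow y p.
Proof.
  intros Hx Hy; destruct (Req_EM_T y 0) as [-> | Hy0].
  - rewrite Rmult_0_r, !rpow_0; ring.
  - rewrite !rpow_pos by (try apply Rmult_lt_0_compat; lra).
    symmetry; apply Rpower_mult_distr; lra.
Qed.

Lemma rpow_rpow_inv (x p : R) : 0 < x -> p <> 0 -> rpow (rpow x p) (/ p) = x.
Proof.
  intros Hx Hp; rewrite (rpow_pos x), rpow_pos by (try apply exp_pos; lra).
  rewrite Rpower_mult, Rinv_r by lra; apply Rpower_1; lra.
Qed.

Lemma lp_norm3_abs (p a b c : R) :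
  lp_norm3 p a b c = lp_norm3 p (Rabs a) (Rabs b) (Rabs c).
Proof. unfold lp_norm3; rewrite !Rabs_Rabsolu; reflexivity. Qed.

Lemma lp_norm3_le (p a b c a' b' c' : R) : 0 < p ->
  Rabs a <= Rabs a' -> Rabs b <= Rabs b' -> Rabs c <= Rabs c' ->
  lp_norm3 p a b c <= lp_norm3 p a' b' c'.
Proof.
  intros Hp Ha Hb Hc; unfold lp_norm3.
  pose proof (rpow_le _ _ p (Rabs_pos a) Ha Hp).
  pose proof (rpow_le _ _ p (Rabs_pos b) Hb Hp).
  pose proof (rpow_le _ _ p (Rabs_pos c) Hc Hp).
  pose proof (rpow_nonneg (Rabs a) p); pose proof (rpow_nonneg (Rabs b) p);
  pose proof (rpow_nonneg (Rabs c) p).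
  apply rpow_le; [lra | lra | apply Rinv_0_lt_compat; lra].
Qed.

Lemma lp_norm3_scale (p N a b c : R) : 0 < p -> 0 < N ->
  lp_norm3 p (N * a) (N * b) (N * c) = N * lp_norm3 p a b c.
Proof.
  intros Hp HN; unfold lp_norm3.
  rewrite !Rabs_mult, (Rabs_pos_eq N) by lra.
  rewrite !rpow_mul by (try apply Rabs_pos; lra).
  rewrite <- !Rmult_plus_distr_l.
  pose proof (rpow_nonneg (Rabs a) p); pose proof (rpow_nonneg (Rabs b) p);
  pose proof (rpow_nonneg (Rabs c) p).
  rewrite rpow_mul by (try apply rpow_gt0; lra).
  rewrite rpow_rpow_inv by lra; reflexivity.
Qed.

Lemma C4_lp_norm3 : C4 = lp_norm3 (8/5) 1 1 3.
Proof.
  unfold lp_norm3, C4; rewrite Rabs_R1, (Rabs_pos_eq 3), rpow_1 by lra.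
  replace (/ (8/5)) with (5/8) by field; f_equal; lra.
Qed.

Lemma sup_norm2_same_abs (f g : R -> R -> R) (N : R) :
  (forall x y, Rabs (g x y) = Rabs (f x y)) -> sup_norm2_is f N -> sup_norm2_is g N.
Proof.
  intros Hfg [Hub Hlub].
  assert (Hset : forall v, (exists x y, Rabs x <= 1 /\ Rabs y <= 1 /\ v = Rabs (g x y))
                        <-> (exists x y, Rabs x <= 1 /\ Rabs y <= 1 /\ v = Rabs (f x y))).
  { intro v; split; intros (x & y & Hx & Hy & ->); exists x, y; rewrite ?Hfg; auto. }
  split.
  - intros v Hv; apply Hub, Hset, Hv.
  - intros b Hb; apply Hlub; intros v Hv; apply Hb, Hset, Hv.
Qed.

Lemma sup_norm2_eval (f : R -> R -> R) (N x y : R) :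
  sup_norm2_is f N -> Rabs x <= 1 -> Rabs y <= 1 -> Rabs (f x y) <= N.
Proof. intros [Hub _] Hx Hy; apply Hub; exists x, y; auto. Qed.

Lemma polyE_coeff_bounds (a b c N : R) : sup_norm2_is (polyE a b c) N ->
  Rabs a <= N /\ Rabs b <= N /\ Rabs c <= 3 * N.
Proof.
  intro HN.
  assert (H1 : Rabs 1 <= 1) by (rewrite Rabs_R1; lra).
  assert (H0 : Rabs 0 <= 1) by (rewrite Rabs_R0; lra).
  pose proof (sup_norm2_eval _ _ 1 0 HN H1 H0) as Ha.
  pose proof (sup_norm2_eval _ _ 0 1 HN H0 H1) as Hb.
  pose proof (sup_norm2_eval _ _ 1 1 HN H1 H1) as Habc.
  unfold polyE in Ha, Hb, Habc.
  replace (a * 1 ^ 4 + b * 0 ^ 4 + c * 1 ^ 2 * 0 ^ 2) with a in Ha by ring.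
  replace (a * 0 ^ 4 + b * 1 ^ 4 + c * 0 ^ 2 * 1 ^ 2) with b in Hb by ring.
  replace (a * 1 ^ 4 + b * 1 ^ 4 + c * 1 ^ 2 * 1 ^ 2) with (a + b + c) in Habc by ring.
  apply Rabs_le_inv in Ha, Hb, Habc.
  repeat split; try (apply Rabs_le; lra).
Qed.

Lemma polyE_norm_pos (a b c N : R) :
  (a, b, c) <> (0, 0, 0) -> sup_norm2_is (polyE a b c) N -> 0 < N.
Proof.
  intros Hne HN; destruct (polyE_coeff_bounds _ _ _ _ HN) as (Ha & Hb & Hc).
  destruct (Rle_lt_dec N 0) as [HN0 | HN0]; [exfalso | exact HN0].
  apply Rabs_le_inv in Ha, Hb, Hc.
  apply Hne; repeat f_equal; lra.
Qed.

(* ||(a,b,c)||_p <= ||(N,N,3N)||_p = N * C4 by monotonicity and homogeneity. *)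
Lemma DE_set_le_C4 : is_upper_bound DE_set C4.
Proof.
  intros r (a & b & c & N & Hne & HN & ->).
  pose proof (polyE_norm_pos _ _ _ _ Hne HN) as HNpos.
  destruct (polyE_coeff_bounds _ _ _ _ HN) as (Ha & Hb & Hc).
  assert (Hle : lp_norm3 (8/5) a b c <= N * C4).
  { rewrite C4_lp_norm3, <- lp_norm3_scale by lra.
    apply lp_norm3_le; [lra | rewrite (Rabs_pos_eq (N * _)) by lra; lra ..]. }
  apply Rmult_le_reg_r with N; [exact HNpos |].
  unfold Rdiv; rewrite Rmult_assoc, Rinv_l, Rmult_1_r by lra; lra.
Qed.

Lemma square_diff_minus_product_bound (s t : R) : 0 <= s <= 1 -> 0 <= t <= 1 ->
  Rabs ((s - t) * (s - t) - s * t) <= 1.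
Proof.
  intros Hs Ht.
  assert (Hst : 0 <= s * t <= 1) by (split; nra).
  assert (Hdiff : -1 <= s - t <= 1) by lra.
  assert (Hd : 0 <= (s - t) * (s - t) <= 1) by (split; [apply Rle_0_sqr | nra]).
  apply Rabs_le; lra.
Qed.

(* |Q| <= 1 on the square, since Q = (x^2 - y^2)^2 - x^2 y^2. *)
Lemma extremal_bound (x y : R) : Rabs x <= 1 -> Rabs y <= 1 ->
  Rabs (x ^ 4 + y ^ 4 - 3 * x ^ 2 * y ^ 2) <= 1.
Proof.
  intros Hx Hy; apply Rabs_le_inv in Hx, Hy.
  replace (x ^ 4 + y ^ 4 - 3 * x ^ 2 * y ^ 2)
    with ((x ^ 2 - y ^ 2) * (x ^ 2 - y ^ 2) - x ^ 2 * y ^ 2) by ring.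
  apply square_diff_minus_product_bound; split; nra.
Qed.

Lemma extremal_sup_norm : sup_norm2_is (polyE 1 1 (-3)) 1.
Proof.
  split.
  - intros v (x & y & Hx & Hy & ->); unfold polyE.
    replace (1 * x ^ 4 + 1 * y ^ 4 + -3 * x ^ 2 * y ^ 2)
      with (x ^ 4 + y ^ 4 - 3 * x ^ 2 * y ^ 2) by ring.
    apply extremal_bound; assumption.
  - intros u Hu; apply Hu; exists 1, 1; rewrite Rabs_R1; repeat split; try lra.
    unfold polyE; replace (1 * 1 ^ 4 + 1 * 1 ^ 4 + -3 * 1 ^ 2 * 1 ^ 2) with (-1) by ring.
    rewrite Rabs_left; lra.
Qed.

Lemma extremal_opp_sup_norm : sup_norm2_is (polyE (-1) (-1) 3) 1.
Proof.
  apply (sup_norm2_same_abs (polyE 1 1 (-3))); [| exact extremal_sup_norm].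
  intros x y; rewrite <- Rabs_Ropp; f_equal; unfold polyE; ring.
Qed.

Lemma extremal_ratio : lp_norm3 (8/5) 1 1 (-3) / 1 = C4.
Proof.
  rewrite C4_lp_norm3, Rdiv_1_r, lp_norm3_abs, (lp_norm3_abs _ 1 1 3).
  replace (Rabs (-3)) with (Rabs 3) by (rewrite (Rabs_left (-3)), (Rabs_pos_eq 3); lra).
  reflexivity.
Qed.

Lemma extremal_opp_ratio : lp_norm3 (8/5) (-1) (-1) 3 / 1 = C4.
Proof.
  rewrite <- extremal_ratio, lp_norm3_abs, (lp_norm3_abs _ 1 1 (-3)).
  replace (Rabs (-1)) with (Rabs 1) by (rewrite (Rabs_left (-1)), (Rabs_pos_eq 1); lra).
  replace (Rabs 3) with (Rabs (-3)) by (rewrite (Rabs_left (-3)), (Rabs_pos_eq 3); lra).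
  reflexivity.
Qed.

Lemma sup_norm_is_2 (f : list R -> R) (g : R -> R -> R) (N : R) :
  (forall x y, f [x; y] = g x y) -> sup_norm2_is g N -> sup_norm_is 2 f N.
Proof.
  intros Hfg [Hub Hlub]; split.
  - intros v (xs & Hlen & Hbox & ->).
    destruct xs as [| x [| y [|]]]; try discriminate.
    apply Forall_inv in Hbox as Hx; apply Forall_inv_tail, Forall_inv in Hbox as Hy.
    rewrite Hfg; apply Hub; exists x, y; auto.
  - intros u Hu; apply Hlub; intros v (x & y & Hx & Hy & ->).
    apply Hu; exists [x; y]; rewrite Hfg; repeat split; auto.
Qed.

Definition extremal_coef (al : list nat) : R :=
  match al with
  | [4%nat; 0%nat] => 1
  | [0%nat; 4%nat] => 1
  | [2%nat; 2%nat] => -3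
  | _ => 0
  end.

Lemma extremal_hpoly (x y : R) : hpoly 2 4 extremal_coef [x; y] = polyE 1 1 (-3) x y.
Proof. unfold hpoly, sumR, polyE; simpl; ring. Qed.

Lemma extremal_in_D_set : D_set 4 2 C4.
Proof.
  exists extremal_coef, 1; split; [| split].
  - exists [4%nat; 0%nat]; split; [simpl; tauto | simpl; lra].
  - exact (sup_norm_is_2 _ _ _ extremal_hpoly extremal_sup_norm).
  - rewrite <- extremal_ratio; unfold lp_norm3, sumR; simpl.
    rewrite !Rabs_R0, !rpow_0.
    replace (2 * (1 + 1 + 1 + 1) / (1 + 1 + 1 + 1 + 1)) with (8/5) by field.
    replace ((1 + 1 + 1 + 1 + 1) / (2 * (1 + 1 + 1 + 1))) with (/ (8/5)) by field.
    f_equal; f_equal; ring.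
Qed.

Theorem mainTheorem9 :
  (* D_{R,4}(E) = (2 + 3^{8/5})^{5/8} *)
  is_lub DE_set C4 /\
  (* attained at +-(x^4 + y^4 - 3 x^2 y^2) *)
  (exists N, sup_norm2_is (polyE 1 1 (-3)) N /\ lp_norm3 (8/5) 1 1 (-3) / N = C4) /\
  (exists N, sup_norm2_is (polyE (-1) (-1) 3) N /\ lp_norm3 (8/5) (-1) (-1) 3 / N = C4) /\
  (* D_{R,4}(l_infty^2) >= C4 *)
  (forall U, is_upper_bound (D_set 4 2) U -> C4 <= U) /\
  (* D_{R,4} >= C4 *)
  (forall U, is_upper_bound (D_all_set 4) U -> C4 <= U).
Proof.
  assert (HC4 : DE_set C4).
  { exists 1, 1, (-3), 1; split; [intro H; injection H; lra |].
    split; [exact extremal_sup_norm | symmetry; exact extremal_ratio]. }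
  split; [split; [exact DE_set_le_C4 | intros U HU; exact (HU _ HC4)] |].
  split; [exists 1; split; [exact extremal_sup_norm | exact extremal_ratio] |].
  split; [exists 1; split; [exact extremal_opp_sup_norm | exact extremal_opp_ratio] |].
  split; intros U HU; apply HU; [| exists 2%nat]; exact extremal_in_D_set.
Qed.
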